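(* Fix a real number $0<\varepsilon<1$. There is a constant $c_0=c_0(\varepsilon)$ such that for every real $c\ge c_0$ there is $n_0$ with the following property: no line in $\mathbb{R}^2$ intersects more than two of the squares $Q_n$, $n\ge n_0$, where $Q_n$ is the closed axis-parallel square with side length $\left\lfloor \frac{2^{n}}{cn^{1+\varepsilon}}\right\rfloor$ whose top left corner is $\left(2^{n},\left\lfloor \frac{2^{n}}{n^{\varepsilon}}\right\rfloor\right)$, i.e. $$Q_n=\left[2^n,\,2^n+\left\lfloor \tfrac{2^{n}}{cn^{1+\varepsilon}}\right\rfloor\right]\times\left[\left\lfloor \tfrac{2^{n}}{n^{\varepsilon}}\right\rfloor-\left\lfloor \tfrac{2^{n}}{cn^{1+\varepsilon}}\right\rfloor,\,\left\lfloor \tfrac{2^{n}}{n^{\varepsilon}}\right\rfloor\right].$$ *)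

From Stdlib Require Import Reals.
Open Scope R_scope.

(* floor of a real number, as a real: Int_part x = up x - 1 is the greatest
   integer <= x. *)
Definition floorR (x : R) : R := IZR (Int_part x).

Definition side (eps c : R) (n : nat) : R :=
  floorR (2 ^ n / (c * Rpower (INR n) (1 + eps))).

Definition top (eps : R) (n : nat) : R :=
  floorR (2 ^ n / Rpower (INR n) eps).

Definition in_Q (eps c : R) (n : nat) (x y : R) : Prop :=
  2 ^ n <= x <= 2 ^ n + side eps c n /\
  top eps n - side eps c n <= y <= top eps n.

Definition line_meets_Q (a b d eps c : R) (n : nat) : Prop :=
  exists x y : R, a * x + b * y = d /\ in_Q eps c n x y.

(* Dividing a x + b y = d by x shows that (x, y) |-> (1/x, y/x) maps lines to
   lines, so it suffices that the images of three squares are never collinear.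
   The image of Q_n lies in a box around (2^-n, n^-eps) of relative width
   delta_n = n^-eps / (c n) and of height 2 delta_n + 2^-n, both small compared
   to w_n = eps n^(-eps-1) once c >= 200/eps and n >= 100/eps.  For n1 < n2 < n3,
   with j = n2 - n1 and k = n3 - n2, the first coordinates of the centres are
   2^-n2 (2^j - 1) and 2^-n2 (1 - 2^-k) apart, while the second coordinates drop
   by at most about j <= 2^j - 1 and at least about k >= 2 (1 - 2^-k) times
   w_n2.  The two secant slopes thus differ by a factor close to 2, which
   survives the perturbation. *)

From Stdlib Require Import Reals Lra Lia Psatz.
Open Scope R_scope.

Lemma floorR_spec x : x - 1 < floorR x <= x.
Proof. unfold floorR; destruct (base_Int_part x); lra. Qed.

Lemma ln_le_sub_1 x : 0 < x -> ln x <= x - 1.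
Proof. intros Hx; generalize (exp_ineq1_le (ln x)); rewrite exp_ln; lra. Qed.

Lemma Rpower_opp_tangent p q e : 0 < p -> 0 < q -> 0 <= e ->
  Rpower p (- e) - Rpower q (- e) <= e * ((q - p) / p) * Rpower p (- e).
Proof.
  intros Hp Hq He.
  assert (Hqp : 0 < q / p) by (apply Rdiv_lt_0_compat; lra).
  assert (Hmul : Rpower q (- e) = Rpower p (- e) * Rpower (q / p) (- e))
    by (rewrite Rpower_mult_distr by lra; f_equal; field; lra).
  assert (Htan : 1 - e * ((q - p) / p) <= Rpower (q / p) (- e)).
  { replace ((q - p) / p) with (q / p - 1) by (field; lra).
    unfold Rpower; generalize (exp_ineq1_le (- e * ln (q / p))) (ln_le_sub_1 _ Hqp); nra. }
  assert (0 < Rpower p (- e)) by apply exp_pos.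
  rewrite Hmul; nra.
Qed.

Lemma Rpower_opp_ratio p q e : 0 < p <= q -> 0 <= e <= 1 ->
  Rpower p (- e) <= q / p * Rpower q (- e).
Proof.
  intros Hpq He.
  assert (Hqp : 1 <= q / p) by (assert (p * (q / p) = q) by (field; lra); nra).
  replace (Rpower p (- e)) with (Rpower (q / p) e * Rpower q (- e))
    by (unfold Rpower, Rdiv; rewrite <- exp_plus, ln_mult, ln_Rinv
          by (try apply Rinv_0_lt_compat; lra); f_equal; ring).
  apply Rmult_le_compat_r; [apply Rlt_le, exp_pos|].
  rewrite <- (Rpower_1 (q / p)) at 2 by lra; apply Rle_Rpower; lra.
Qed.

Lemma Rpower_opp_sub_le p q e : 0 < p <= q -> 0 <= e <= 1 ->
  Rpower p (- e) - Rpower q (- e) <= e * (q - p) * q / p ^ 2 * Rpower q (- e).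
Proof.
  intros Hpq He.
  assert (Hd : 0 <= e * ((q - p) / p))
    by (apply Rmult_le_pos; [|apply Rmult_le_pos; [|apply Rlt_le, Rinv_0_lt_compat]]; lra).
  eapply Rle_trans; [apply Rpower_opp_tangent; lra|].
  replace (e * (q - p) * q / p ^ 2 * Rpower q (- e))
    with (e * ((q - p) / p) * (q / p * Rpower q (- e))) by (field; lra).
  apply Rmult_le_compat_l, Rpower_opp_ratio; lra.
Qed.

Lemma Rpower_opp_sub_ge q m e : 0 < q <= m -> 0 <= e <= 1 ->
  e * (m - q) * q / m ^ 2 * Rpower q (- e) <= Rpower q (- e) - Rpower m (- e).
Proof.
  intros Hqm He.
  assert (Hd : 0 <= e * ((m - q) / m))
    by (apply Rmult_le_pos; [|apply Rmult_le_pos; [|apply Rlt_le, Rinv_0_lt_compat]]; lra).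
  assert (Htan := Rpower_opp_tangent m q e ltac:(lra) ltac:(lra) ltac:(lra)).
  assert (Hratio := Rpower_opp_ratio q m e Hqm He).
  assert (Hm : q / m * Rpower q (- e) <= Rpower m (- e)).
  { replace (Rpower m (- e)) with (q / m * (m / q * Rpower m (- e))) by (field; lra).
    apply Rmult_le_compat_l; [apply Rmult_le_pos; [|apply Rlt_le, Rinv_0_lt_compat]|]; lra. }
  replace (e * (m - q) * q / m ^ 2 * Rpower q (- e))
    with (e * ((m - q) / m) * (q / m * Rpower q (- e))) by (field; lra).
  replace ((q - m) / m) with (- ((m - q) / m)) in Htan by (field; lra).
  apply Rle_trans with (e * ((m - q) / m) * Rpower m (- e)); [|lra].
  apply Rmult_le_compat_l; lra.
Qed.

Lemma linear_sq_le_pow2 (j : nat) (p : R) : (1 <= j)%nat -> 100 <= p ->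
  INR j * (p + INR j) ^ 2 <= 3 / 2 * (2 ^ j - 1) * p ^ 2.
Proof.
  intros Hj Hp; induction Hj as [|j Hj IH].
  - simpl; nra.
  - rewrite S_INR; simpl pow; simpl pow in IH.
    assert (HJ : 1 <= INR j) by (apply (le_INR 1); exact Hj).
    destruct (Nat.eq_dec j 1) as [->|Hj1].
    + simpl; nra.
    + assert (HJ2 : 2 <= INR j) by (apply (le_INR 2); lia).
      (* from j = 2 on, the left-hand side at most doubles at each step:
         (j + 1) (s + 1)^2 <= 2 j s^2 with s = p + j *)
      assert (0 <= (INR j - 2) * ((p + INR j) ^ 2 - 2 * (p + INR j) - 1))
        by (apply Rmult_le_pos; nra).
      nra.
Qed.

Lemma cube_le_pow2 (n : nat) : (10 <= n)%nat -> INR n ^ 3 <= 2 ^ n.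
Proof.
  intros Hn; induction Hn as [|n Hn IH].
  - simpl; lra.
  - assert (10 <= INR n) by (replace 10 with (INR 10) by (simpl; lra); apply le_INR; exact Hn).
    rewrite S_INR; simpl pow; simpl pow in IH; nra.
Qed.

Lemma inv_pow_sub x m n : x <> 0 -> (m <= n)%nat -> / x ^ m = x ^ (n - m) * / x ^ n.
Proof.
  intros Hx Hmn; replace n with (n - m + m)%nat at 2 by lia.
  rewrite pow_add; field; split; apply pow_nonzero; exact Hx.
Qed.

Lemma inv_coords_bounds (X G d x y : R) : 0 < X -> 0 <= G <= 1 -> 0 <= d ->
  X <= x <= X * (1 + d) -> X * G - 1 - X * d <= y <= X * G ->
  (1 - d) / X <= / x <= / X /\ G - (2 * d + / X) <= y / x <= G.
Proof.
  intros HX HG Hd Hx Hy.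
  assert (Hu : x * / x = 1) by (field; lra).
  assert (Hv : X * / X = 1) by (field; lra).
  assert (0 < / x) by (apply Rinv_0_lt_compat; lra).
  assert (0 < / X) by (apply Rinv_0_lt_compat; lra).
  unfold Rdiv; split; [split|split].
  - assert ((1 - d) * x <= X) by nra. nra.
  - apply Rinv_le_contravar; lra.
  - assert (- 1 - 2 * X * d <= y - G * x) by nra.
    assert (/ x <= / X) by (apply Rinv_le_contravar; lra).
    assert ((- 1 - 2 * X * d) * / X <= (- 1 - 2 * X * d) * / x) by nra.
    assert ((- 1 - 2 * X * d) * / x <= (y - G * x) * / x) by nra.
    replace ((- 1 - 2 * X * d) * / X) with (- (2 * d + / X)) in * by (field; lra).
    replace ((y - G * x) * / x) with (y * / x - G) in * by (field; lra).
    lra.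
  - assert (y * / x <= G * x * / x) by (apply Rmult_le_compat_r; nra).
    replace (G * x * / x) with G in * by (field; lra).
    lra.
Qed.

Definition det3 (x1 y1 x2 y2 x3 y3 : R) : R :=
  (x2 - x1) * (y3 - y1) - (x3 - x1) * (y2 - y1).

Lemma det3_line a b d x1 y1 x2 y2 x3 y3 : ~ (a = 0 /\ b = 0) ->
  a * x1 + b * y1 = d -> a * x2 + b * y2 = d -> a * x3 + b * y3 = d ->
  det3 x1 y1 x2 y2 x3 y3 = 0.
Proof.
  intros Hab E1 E2 E3; unfold det3.
  assert (Ha : a * ((x2 - x1) * (y3 - y1) - (x3 - x1) * (y2 - y1)) = 0).
  { replace (a * _) with ((y3 - y1) * ((a * x2 + b * y2) - (a * x1 + b * y1))
                          - (y2 - y1) * ((a * x3 + b * y3) - (a * x1 + b * y1))) by ring.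
    rewrite E1, E2, E3; ring. }
  assert (Hb : b * ((x2 - x1) * (y3 - y1) - (x3 - x1) * (y2 - y1)) = 0).
  { replace (b * _) with ((x2 - x1) * ((a * x3 + b * y3) - (a * x1 + b * y1))
                          - (x3 - x1) * ((a * x2 + b * y2) - (a * x1 + b * y1))) by ring.
    rewrite E1, E2, E3; ring. }
  destruct (Rmult_integral _ _ Ha) as [Ha0|]; [|assumption].
  destruct (Rmult_integral _ _ Hb) as [Hb0|]; [|assumption].
  exfalso; exact (Hab (conj Ha0 Hb0)).
Qed.

Lemma det3_inv_coords_line a b d x1 y1 x2 y2 x3 y3 :
  x1 <> 0 -> x2 <> 0 -> x3 <> 0 -> ~ (a = 0 /\ b = 0) ->
  a * x1 + b * y1 = d -> a * x2 + b * y2 = d -> a * x3 + b * y3 = d ->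
  det3 (/ x1) (y1 / x1) (/ x2) (y2 / x2) (/ x3) (y3 / x3) = 0.
Proof.
  intros Hx1 Hx2 Hx3 Hab E1 E2 E3.
  apply (det3_line d (- b) a).
  - intros [Hd Hb]; apply Hab; split; [|lra].
    rewrite Hd in E1; assert (Hb0 : b = 0) by lra; subst b.
    destruct (Rmult_integral a x1) as [|]; [lra|assumption|contradiction].
  - rewrite <- E1; field; exact Hx1.
  - rewrite <- E2; field; exact Hx2.
  - rewrite <- E3; field; exact Hx3.
Qed.

Lemma secant_slopes_lt (U T F d e w X1 X2 Y1 Y2 : R) :
  0 < U -> 2 <= T -> 0 <= d <= 1/100 -> 0 < w -> 0 <= e <= w / 50 -> 1/2 <= F <= 1 ->
  U * (T * (1 - d) - 1) <= X1 -> 0 <= X2 <= U * F ->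
  Y1 <= 3/2 * (T - 1) * w + e -> 19/10 * F * w - e <= Y2 ->
  X2 * Y1 < X1 * Y2.
Proof.
  intros HU HT Hd Hw He HF HX1 HX2 HY1 HY2.
  assert (HUF : 0 < U * F) by (apply Rmult_lt_0_compat; lra).
  apply Rle_lt_trans with (U * F * ((3/2 * T - 148/100) * w)).
  { apply Rle_trans with (X2 * (3/2 * (T - 1) * w + e)).
    - apply Rmult_le_compat_l; lra.
    - apply Rmult_le_compat; nra. }
  apply Rlt_le_trans with (U * (99/100 * T - 1) * (186/100 * F * w)).
  { replace (U * (99/100 * T - 1) * (186/100 * F * w))
      with (U * F * ((99/100 * T - 1) * (186/100) * w)) by ring.
    apply Rmult_lt_compat_l; [lra|].
    apply Rmult_lt_compat_r; lra. }
  apply Rmult_le_compat.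
  - apply Rmult_le_pos; lra.
  - nra.
  - apply Rle_trans with (U * (T * (1 - d) - 1)); [apply Rmult_le_compat_l; nra | lra].
  - nra.
Qed.

Section Squares.

Variables eps c : R.
Hypothesis Heps : 0 < eps <= 1.
Hypothesis Hc : 200 / eps <= c.

Definition decay (n : nat) : R := Rpower (INR n) (- eps).
Definition decay_slope (n : nat) : R := eps * decay n / INR n.
Definition rel_side (n : nat) : R := decay n / (c * INR n).
Definition vert_err (n : nat) : R := 2 * rel_side n + / 2 ^ n.

Lemma c_pos : 0 < c.
Proof.
  apply Rlt_le_trans with (200 / eps); [apply Rdiv_lt_0_compat|]; lra.
Qed.

Lemma decay_pos n : 0 < decay n.
Proof. apply exp_pos. Qed.

Lemma decay_bounds n : (1 <= n)%nat -> / INR n <= decay n <= 1.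
Proof.
  intros Hn; assert (H1 : 1 <= INR n) by (apply (le_INR 1); exact Hn).
  unfold decay; rewrite Rpower_Ropp; split.
  - apply Rinv_le_contravar; [apply exp_pos|].
    rewrite <- (Rpower_1 (INR n)) at 2 by lra; apply Rle_Rpower; lra.
  - rewrite <- Rinv_1; apply Rinv_le_contravar; [lra|].
    rewrite <- (Rpower_O (INR n)) by lra; apply Rle_Rpower; lra.
Qed.

Lemma decay_slope_pos n : (1 <= n)%nat -> 0 < decay_slope n.
Proof.
  intros Hn; assert (1 <= INR n) by (apply (le_INR 1); exact Hn).
  apply Rdiv_lt_0_compat; [apply Rmult_lt_0_compat; [|apply decay_pos]|]; lra.
Qed.

Lemma rel_side_bounds n : (1 <= n)%nat ->
  0 <= rel_side n <= decay_slope n / 200 /\ rel_side n <= 1 / 100.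
Proof.
  intros Hn; assert (1 <= INR n) by (apply (le_INR 1); exact Hn).
  destruct (decay_bounds n Hn); pose proof (decay_pos n); pose proof c_pos.
  assert (Hinvc : / c <= eps / 200).
  { replace (eps / 200) with (/ (200 / eps)) by (field; lra).
    apply Rinv_le_contravar; [apply Rdiv_lt_0_compat|]; lra. }
  assert (Hg : 0 < decay n / INR n) by (apply Rdiv_lt_0_compat; lra).
  assert (Hg1 : decay n / INR n <= 1)
    by (assert (INR n * (decay n / INR n) = decay n) by (field; lra); nra).
  replace (rel_side n) with (decay n / INR n * / c) by (unfold rel_side; field; lra).
  replace (decay_slope n / 200) with (decay n / INR n * (eps / 200))
    by (unfold decay_slope; field; lra).
  assert (0 < / c) by (apply Rinv_0_lt_compat; lra).
  split; [split|]; nra.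
Qed.

Lemma in_Q_inv_coords n x y : (1 <= n)%nat -> in_Q eps c n x y ->
  0 < x /\ (1 - rel_side n) / 2 ^ n <= / x <= / 2 ^ n /\
  decay n - vert_err n <= y / x <= decay n.
Proof.
  intros Hn [Hx Hy]; assert (1 <= INR n) by (apply (le_INR 1); exact Hn).
  assert (HX : 0 < 2 ^ n) by (apply pow_lt; lra).
  assert (Hside : side eps c n <= 2 ^ n * rel_side n).
  { eapply Rle_trans; [apply floorR_spec|].
    assert (0 < Rpower (INR n) eps) by apply exp_pos.
    pose proof c_pos.
    unfold rel_side, decay; rewrite Rpower_plus, Rpower_1, Rpower_Ropp by lra.
    right; field; lra. }
  assert (Htop : 2 ^ n * decay n - 1 < top eps n <= 2 ^ n * decay n)
    by (unfold top, decay; rewrite Rpower_Ropp; apply floorR_spec).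
  destruct (decay_bounds n Hn); destruct (rel_side_bounds n Hn) as [[? _] _].
  split; [lra|].
  pose proof (decay_pos n).
  apply inv_coords_bounds; [lra|lra|lra| |]; nra.
Qed.

Lemma large_index_bounds n : 100 / eps <= INR n -> 100 <= eps * INR n /\ (10 <= n)%nat.
Proof.
  intros Hn.
  assert (H : 100 <= eps * INR n).
  { replace 100 with (eps * (100 / eps)) by (field; lra).
    apply Rmult_le_compat_l; lra. }
  split; [exact H|].
  apply INR_le; simpl; nra.
Qed.

Lemma vert_err_bounds n : 100 / eps <= INR n -> 0 <= vert_err n <= decay_slope n / 50.
Proof.
  intros Hn; destruct (large_index_bounds n Hn) as [Hepsn Hn10].
  assert (Hn1 : (1 <= n)%nat) by lia.
  assert (HN : 10 <= INR n) by (apply (le_INR 10) in Hn10; simpl in Hn10; lra).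
  destruct (rel_side_bounds n Hn1) as [[Hd0 Hd] _].
  destruct (decay_bounds n Hn1) as [Hg _].
  assert (0 < / 2 ^ n) by (apply Rinv_0_lt_compat, pow_lt; lra).
  assert (Hpow : / 2 ^ n <= decay_slope n / 100).
  { apply Rle_trans with (/ INR n ^ 3);
      [apply Rinv_le_contravar; [apply pow_lt; lra | apply cube_le_pow2, Hn10]|].
    set (iN := / INR n) in *.
    assert (HiN : INR n * iN = 1) by (unfold iN; field; lra).
    assert (0 < iN) by (unfold iN; apply Rinv_0_lt_compat; lra).
    assert (100 * iN <= eps) by nra.
    replace (/ INR n ^ 3) with (iN * iN * iN) by (unfold iN; field; lra).
    replace (decay_slope n / 100) with (eps * decay n * iN / 100)
      by (unfold decay_slope, iN; field; lra).
    assert (100 * (iN * iN) <= eps * decay n) by nra.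
    nra. }
  unfold vert_err; lra.
Qed.

Lemma decay_drop_le n1 n2 : 100 <= INR n1 -> (n1 < n2)%nat ->
  decay n1 - decay n2 <= 3 / 2 * (2 ^ (n2 - n1) - 1) * decay_slope n2.
Proof.
  intros Hp H12.
  assert (Hpq : INR n1 <= INR n2) by (apply le_INR; lia).
  assert (Hj : INR (n2 - n1) = INR n2 - INR n1) by (apply minus_INR; lia).
  assert (Hpow := linear_sq_le_pow2 (n2 - n1) (INR n1) ltac:(lia) Hp).
  rewrite Hj in Hpow; replace (INR n1 + (INR n2 - INR n1)) with (INR n2) in Hpow by ring.
  eapply Rle_trans; [apply Rpower_opp_sub_le; lra|].
  fold (decay n2).
  replace (eps * (INR n2 - INR n1) * INR n2 / INR n1 ^ 2 * decay n2)
    with ((INR n2 - INR n1) * INR n2 ^ 2 / INR n1 ^ 2 * decay_slope n2)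
    by (unfold decay_slope; field; lra).
  apply Rmult_le_compat_r; [apply Rlt_le, decay_slope_pos; apply INR_le; simpl; lra|].
  replace (3 / 2 * (2 ^ (n2 - n1) - 1))
    with (3 / 2 * (2 ^ (n2 - n1) - 1) * INR n1 ^ 2 / INR n1 ^ 2) by (field; lra).
  unfold Rdiv; apply Rmult_le_compat_r; [apply Rlt_le, Rinv_0_lt_compat, pow_lt; lra|].
  exact Hpow.
Qed.

Lemma decay_antitone n m : (1 <= n)%nat -> (n <= m)%nat -> decay m <= decay n.
Proof.
  intros Hn Hnm.
  assert (1 <= INR n) by (apply (le_INR 1); exact Hn).
  assert (INR n <= INR m) by (apply le_INR; exact Hnm).
  unfold decay; rewrite !Rpower_Ropp.
  apply Rinv_le_contravar; [apply exp_pos|apply Rle_Rpower_l; lra].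
Qed.

Lemma decay_drop_ge_scaled n m : (1 <= n)%nat -> (n <= m)%nat ->
  (INR m - INR n) * INR n ^ 2 * decay_slope n <= INR m ^ 2 * (decay n - decay m).
Proof.
  intros Hn Hnm.
  assert (1 <= INR n) by (apply (le_INR 1); exact Hn).
  assert (INR n <= INR m) by (apply le_INR; exact Hnm).
  assert (Hdrop := Rpower_opp_sub_ge (INR n) (INR m) eps ltac:(lra) ltac:(lra)).
  fold (decay n) (decay m) in Hdrop.
  replace ((INR m - INR n) * INR n ^ 2 * decay_slope n)
    with (INR m ^ 2 * (eps * (INR m - INR n) * INR n / INR m ^ 2 * decay n))
    by (unfold decay_slope; field; lra).
  apply Rmult_le_compat_l; [apply pow2_ge_0|exact Hdrop].
Qed.

Lemma decay_drop_ge n2 n3 d : 100 <= INR n2 -> (n2 < n3)%nat -> 0 <= d <= 1 / 100 ->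
  19 / 10 * (1 - (1 - d) / 2 ^ (n3 - n2)) * decay_slope n2 <= decay n2 - decay n3.
Proof.
  intros Hq H23 Hd.
  assert (Hn2 : (1 <= n2)%nat) by (apply INR_le; simpl; lra).
  assert (Hw := decay_slope_pos n2 Hn2).
  destruct (Nat.eq_dec n3 (S n2)) as [->|Hk].
  - assert (Hdrop := decay_drop_ge_scaled n2 (S n2) Hn2 ltac:(lia)).
    rewrite S_INR in Hdrop; replace (S n2 - n2)%nat with 1%nat by lia.
    apply Rmult_le_reg_l with ((INR n2 + 1) ^ 2); [apply pow_lt; lra|].
    eapply Rle_trans; [|exact Hdrop].
    replace (1 - (1 - d) / 2 ^ 1) with ((1 + d) / 2) by (simpl; field).
    assert (96 / 100 * (INR n2 + 1) ^ 2 <= INR n2 ^ 2) by nra.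
    apply Rle_trans with ((INR n2 + 1) ^ 2 * (96 / 100 * decay_slope n2)); [|nra].
    apply Rmult_le_compat_l; [apply pow2_ge_0|].
    apply Rmult_le_compat_r; lra.
  - assert (Hdrop := decay_drop_ge_scaled n2 (S (S n2)) Hn2 ltac:(lia)).
    rewrite !S_INR in Hdrop.
    assert (Hanti := decay_antitone (S (S n2)) n3 ltac:(lia) ltac:(lia)).
    assert (0 <= (1 - d) / 2 ^ (n3 - n2))
      by (apply Rmult_le_pos; [|apply Rlt_le, Rinv_0_lt_compat, pow_lt]; lra).
    apply Rle_trans with (19 / 10 * decay_slope n2); [nra|].
    apply Rmult_le_reg_l with ((INR n2 + 1 + 1) ^ 2); [apply pow_lt; lra|].
    assert (19 / 10 * (INR n2 + 1 + 1) ^ 2 <= 2 * INR n2 ^ 2) by nra.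
    nra.
Qed.

Lemma det3_inv_coords_pos n1 n2 n3 x1 y1 x2 y2 x3 y3 :
  100 / eps <= INR n1 -> (n1 < n2)%nat -> (n2 < n3)%nat ->
  in_Q eps c n1 x1 y1 -> in_Q eps c n2 x2 y2 -> in_Q eps c n3 x3 y3 ->
  0 < det3 (/ x1) (y1 / x1) (/ x2) (y2 / x2) (/ x3) (y3 / x3).
Proof.
  intros Hn1 H12 H23 Q1 Q2 Q3.
  destruct (large_index_bounds n1 Hn1) as [Hepsn Hn10].
  assert (H100 : 100 <= INR n1) by nra.
  assert (Hn12 : INR n1 <= INR n2) by (apply le_INR; lia).
  assert (H100' : 100 <= INR n2) by lra.
  assert (Hn2 : 100 / eps <= INR n2) by lra.
  destruct (in_Q_inv_coords n1 x1 y1 ltac:(lia) Q1) as [Hx1 [[u1l u1u] [r1l r1u]]].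
  destruct (in_Q_inv_coords n2 x2 y2 ltac:(lia) Q2) as [Hx2 [[u2l u2u] [r2l r2u]]].
  destruct (in_Q_inv_coords n3 x3 y3 ltac:(lia) Q3) as [Hx3 [[u3l u3u] [r3l r3u]]].
  unfold Rdiv in u1l, u2l, u3l.
  destruct (rel_side_bounds n1 ltac:(lia)) as [[Hd1 _] Hd1'].
  destruct (rel_side_bounds n2 ltac:(lia)) as [[Hd2 _] Hd2'].
  destruct (rel_side_bounds n3 ltac:(lia)) as [[Hd3 _] Hd3'].
  assert (Hw := decay_slope_pos n2 ltac:(lia)).
  assert (He := vert_err_bounds n2 Hn2).
  assert (HA := decay_drop_le n1 n2 H100 H12).
  assert (HB := decay_drop_ge n2 n3 (rel_side n3) H100' H23 ltac:(lra)).
  set (U := / 2 ^ n2) in *; set (T := 2 ^ (n2 - n1)) in *; set (S := 2 ^ (n3 - n2)) in *.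
  assert (HU : 0 < U) by (apply Rinv_0_lt_compat, pow_lt; lra).
  assert (HT : 2 <= T) by (apply Rle_trans with (2 ^ 1); [simpl; lra | apply Rle_pow; [lra|lia]]).
  assert (HS : 2 <= S) by (apply Rle_trans with (2 ^ 1); [simpl; lra | apply Rle_pow; [lra|lia]]).
  assert (E1 : / 2 ^ n1 = T * U) by (apply inv_pow_sub; [lra|lia]).
  assert (E3 : / 2 ^ n3 = U / S)
    by (unfold U, S, Rdiv; rewrite (inv_pow_sub 2 n2 n3) by (lra || lia); field;
        split; apply pow_nonzero; lra).
  rewrite E1 in u1l, u1u; rewrite E3 in u3l, u3u.
  set (F := 1 - (1 - rel_side n3) / S) in *.
  assert (HiS : 0 < / S <= / 2)
    by (split; [apply Rinv_0_lt_compat | apply Rinv_le_contravar]; lra).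
  assert (HUS : U * / S <= U * / 2) by (apply Rmult_le_compat_l; lra).
  assert (HF : 1 / 2 <= F <= 1) by (unfold F, Rdiv; nra).
  replace (det3 _ _ _ _ _ _)
    with ((/ x1 - / x2) * (y2 / x2 - y3 / x3) - (/ x2 - / x3) * (y1 / x1 - y2 / x2))
    by (unfold det3; ring).
  apply Rlt_0_minus.
  apply (secant_slopes_lt U T F (rel_side n1) (vert_err n2) (decay_slope n2)); try lra.
  unfold F, Rdiv in *; split; nra.
Qed.

End Squares.

Theorem lemma3p2 (eps : R) (Heps : 0 < eps < 1) :
  exists c0 : R, forall c : R, c0 <= c ->
  exists n0 : nat, forall a b d : R, ~ (a = 0 /\ b = 0) ->
  forall n1 n2 n3 : nat, (n0 <= n1)%nat -> (n1 < n2)%nat -> (n2 < n3)%nat ->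
    ~ (line_meets_Q a b d eps c n1 /\ line_meets_Q a b d eps c n2 /\
       line_meets_Q a b d eps c n3).
Proof.
  exists (200 / eps); intros c Hc.
  destruct (INR_unbounded (100 / eps)) as [n0 Hn0].
  exists n0; intros a b d Hab n1 n2 n3 H01 H12 H23
    [[x1 [y1 [E1 Q1]]] [[x2 [y2 [E2 Q2]]] [x3 [y3 [E3 Q3]]]]].
  assert (Hn1 : 100 / eps <= INR n1) by (apply le_INR in H01; lra).
  assert (Hx : forall n x y, in_Q eps c n x y -> x <> 0)
    by (intros n x y [[Hx _] _]; pose proof (pow_lt 2 n ltac:(lra)); lra).
  pose proof (det3_inv_coords_pos eps c ltac:(lra) Hc n1 n2 n3 x1 y1 x2 y2 x3 y3
                Hn1 H12 H23 Q1 Q2 Q3) as Hpos.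
  rewrite (det3_inv_coords_line a b d x1 y1 x2 y2 x3 y3
             (Hx _ _ _ Q1) (Hx _ _ _ Q2) (Hx _ _ _ Q3) Hab E1 E2 E3) in Hpos.
  lra.
Qed.
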